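(* In the setting described in the context, apply to the phase space variables $(P,Q)=(p_1,p_2,p_3,q_1,q_2,q_3)\in(\mathbb{R}^2)^6$ of the charged three-body problem the following successive changes of variables: (1) $P=\mathcal A^{-T}Y$, $Q=\mathcal AX$ with $Y=(G,Z,W)$, $X=(g,z,w)$; (2) set $G=g=0$ and rotate: $\tilde z=R(\theta(t))^Tz$, $\tilde Z=R(\theta(t))^TZ$, $\tilde w=R(\theta(t))^Tw$, $\tilde W=R(\theta(t))^TW$; (3) $\hat z=\tilde z/r(t)$, $\hat Z=r(t)\tilde Z-\dot r(t)\tilde z$, $\hat w=\tilde w/r(t)$, $\hat W=r(t)\tilde W-\dot r(t)\tilde w$; (4) replace the time $t$ by the true anomaly $\theta$ as independent variable; (5) $\bar z=\sigma\hat z$, $\bar Z=\sigma^{-1}\hat Z$, $\bar w=\sigma\hat w$, $\bar W=\sigma^{-1}\hat W$. Then the elliptic triangle solution $Q(t)=(r(t)R(\theta(t))a_1,r(t)R(\theta(t))a_2,r(t)R(\theta(t))a_3)^T$, $P(t)=M\dot Q(t)$, is transformed to the solution, with $G\equiv g\equiv0$, of the Hamiltonian system with Hamiltonian $H$ given by $$(\bar Z(\theta),\bar W(\theta))=(0,\sigma,0,0),\qquad (\bar z(\theta),\bar w(\theta))=(\sigma,0,0,0).$$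
   Context: Setting: masses $m_1,m_2,m_3>0$ with $m_1+m_2+m_3=1$, charges $e_i\in\mathbb{R}$, $\delta_{ij}=1-\frac{e_ie_j}{m_im_j}>0$, with $\delta_{ij}^{1/3}+\delta_{jk}^{1/3}>\delta_{ki}^{1/3}$ for cyclic $(i,j,k)$. $M={\rm diag}(m_1I_2,m_2I_2,m_3I_2)$. Let $\theta_1,\theta_2,\theta_3$ be the inner angles of a non-collinear central configuration of the charged problem (so $\sin\theta_1:\sin\theta_2:\sin\theta_3=\delta_{23}^{1/3}:\delta_{31}^{1/3}:\delta_{12}^{1/3}$), $\alpha=\sqrt{m_2m_3\sin^2\theta_1+m_3m_1\sin^2\theta_2+m_1m_2\sin^2\theta_3}$, and $a_1=\frac1\alpha(m_2\cos\theta_2\sin\theta_3-m_3\sin\theta_2\cos\theta_3,\ (m_2+m_3)\sin\theta_2\sin\theta_3)^T$, $a_2=\frac1\alpha(-m_1\cos\theta_2\sin\theta_3-m_3\sin(\theta_2+\theta_3),\ -m_1\sin\theta_2\sin\theta_3)^T$, $a_3=\frac1\alpha(m_2\sin(\theta_2+\theta_3)+m_1\sin\theta_2\cos\theta_3,\ -m_1\sin\theta_2\sin\theta_3)^T$ (this configuration has center of mass $0$ and $\sum m_i|a_i|^2=1$). $J=\begin{pmatrix}0&-1\\1&0\end{pmatrix}$, $R(\varphi)$ rotation by $\varphi$. $A_i=(a_i,Ja_i)$ ($2\times2$), $\rho_i=\sqrt{m_1m_2m_3}/m_i$, $B_1=\frac{\rho_1\sin\theta_1}{\alpha}I$, $B_2=-\frac{\rho_2\sin\theta_2}{\alpha}R(\theta_3)$,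 $B_3=-\frac{\rho_3\sin\theta_3}{\alpha}R(-\theta_2)$, and $\mathcal A$ is the $6\times6$ matrix with block rows $(I,A_i,B_i)$, $i=1,2,3$ (it satisfies $\mathcal A^TM\mathcal A=I$). $\mu=\sum_{i<j}m_im_j\delta_{ij}/|a_i-a_j|$. $z(t)=r(t)(\cos\theta(t),\sin\theta(t))$ is an elliptic Kepler orbit of $\ddot z=-\mu z/|z|^3$ with eccentricity $e\in[0,1)$ and parameter $p>0$, so that in terms of the true anomaly $r(\theta)=p/(1+e\cos\theta)$; $\sigma=(\mu p)^{1/4}$. $U(z,w)=\sum_{i<j}\frac{m_im_j\delta_{ij}}{|(A_i-A_j)z+(B_i-B_j)w|}$ for $z,w\in\mathbb{R}^2$, and $$H(\theta,\bar Z,\bar W,\bar z,\bar w)=\tfrac12(|\bar Z|^2+|\bar W|^2)+(\bar z\cdot J\bar Z+\bar w\cdot J\bar W)+\frac{p-r(\theta)}{2p}(|\bar z|^2+|\bar w|^2)-\frac{r(\theta)}{(\mu p)^{1/4}}U(\bar z,\bar w).$$ *)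

From Stdlib Require Import Reals Lra.
From Coquelicot Require Import Coquelicot.
Open Scope R_scope.

Definition V2 := (R * R)%type.
Definition v0 : V2 := (0, 0).
Definition vadd (u v : V2) : V2 := (fst u + fst v, snd u + snd v).
Definition vsub (u v : V2) : V2 := (fst u - fst v, snd u - snd v).
Definition vscal (k : R) (u : V2) : V2 := (k * fst u, k * snd u).
Definition vdot (u v : V2) : R := fst u * fst v + snd u * snd v.
Definition vnorm (u : V2) : R := sqrt (fst u ^ 2 + snd u ^ 2).

Record M2 := mkM2 { a11 : R; a12 : R; a21 : R; a22 : R }.
Definition mv (A : M2) (u : V2) : V2 :=
  (a11 A * fst u + a12 A * snd u, a21 A * fst u + a22 A * snd u).
Definition mtv (A : M2) (u : V2) : V2 :=
  (a11 A * fst u + a21 A * snd u, a12 A * fst u + a22 A * snd u).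
Definition msub (A B : M2) : M2 :=
  mkM2 (a11 A - a11 B) (a12 A - a12 B) (a21 A - a21 B) (a22 A - a22 B).
Definition mscal (k : R) (A : M2) : M2 :=
  mkM2 (k * a11 A) (k * a12 A) (k * a21 A) (k * a22 A).
Definition I2 : M2 := mkM2 1 0 0 1.
Definition Jm : M2 := mkM2 0 (-1) 1 0.
Definition Rot (phi : R) : M2 := mkM2 (cos phi) (- sin phi) (sin phi) (cos phi).
Definition colJ (a : V2) : M2 := mkM2 (fst a) (- snd a) (snd a) (fst a).

(** Data of the problem: masses, charges, inner angles. *)
Record cfg := mkcfg {
  m1 : R; m2 : R; m3 : R;
  ch1 : R; ch2 : R; ch3 : R;
  th1 : R; th2 : R; th3 : R }.

Definition delta (ci cj mi mj : R) : R := 1 - ci * cj / (mi * mj).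
Definition d12 (d : cfg) := delta (ch1 d) (ch2 d) (m1 d) (m2 d).
Definition d23 (d : cfg) := delta (ch2 d) (ch3 d) (m2 d) (m3 d).
Definition d31 (d : cfg) := delta (ch3 d) (ch1 d) (m3 d) (m1 d).

Definition cbrt (x : R) : R := Rpower x (/ 3).

Definition alpha (d : cfg) : R :=
  sqrt (m2 d * m3 d * sin (th1 d) ^ 2 + m3 d * m1 d * sin (th2 d) ^ 2
        + m1 d * m2 d * sin (th3 d) ^ 2).

Definition pa1 (d : cfg) : V2 :=
  vscal (/ alpha d)
   (m2 d * cos (th2 d) * sin (th3 d) - m3 d * sin (th2 d) * cos (th3 d),
    (m2 d + m3 d) * sin (th2 d) * sin (th3 d)).
Definition pa2 (d : cfg) : V2 :=
  vscal (/ alpha d)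
   (- m1 d * cos (th2 d) * sin (th3 d) - m3 d * sin (th2 d + th3 d),
    - m1 d * sin (th2 d) * sin (th3 d)).
Definition pa3 (d : cfg) : V2 :=
  vscal (/ alpha d)
   (m2 d * sin (th2 d + th3 d) + m1 d * sin (th2 d) * cos (th3 d),
    - m1 d * sin (th2 d) * sin (th3 d)).

Definition Am1 (d : cfg) : M2 := colJ (pa1 d).
Definition Am2 (d : cfg) : M2 := colJ (pa2 d).
Definition Am3 (d : cfg) : M2 := colJ (pa3 d).

Definition rho1 (d : cfg) := sqrt (m1 d * m2 d * m3 d) / m1 d.
Definition rho2 (d : cfg) := sqrt (m1 d * m2 d * m3 d) / m2 d.
Definition rho3 (d : cfg) := sqrt (m1 d * m2 d * m3 d) / m3 d.

Definition Bm1 (d : cfg) : M2 := mscal (rho1 d * sin (th1 d) / alpha d) I2.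
Definition Bm2 (d : cfg) : M2 := mscal (- (rho2 d * sin (th2 d) / alpha d)) (Rot (th3 d)).
Definition Bm3 (d : cfg) : M2 := mscal (- (rho3 d * sin (th3 d) / alpha d)) (Rot (- th2 d)).

Definition mu (d : cfg) : R :=
  m1 d * m2 d * d12 d / vnorm (vsub (pa1 d) (pa2 d))
  + m1 d * m3 d * d31 d / vnorm (vsub (pa1 d) (pa3 d))
  + m2 d * m3 d * d23 d / vnorm (vsub (pa2 d) (pa3 d)).

Definition Upot (d : cfg) (z w : V2) : R :=
  m1 d * m2 d * d12 d
    / vnorm (vadd (mv (msub (Am1 d) (Am2 d)) z) (mv (msub (Bm1 d) (Bm2 d)) w))
  + m1 d * m3 d * d31 d
    / vnorm (vadd (mv (msub (Am1 d) (Am3 d)) z) (mv (msub (Bm1 d) (Bm3 d)) w))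
  + m2 d * m3 d * d23 d
    / vnorm (vadd (mv (msub (Am2 d) (Am3 d)) z) (mv (msub (Bm2 d) (Bm3 d)) w)).

(** r as a function of the true anomaly *)
Definition rtrue (ecc p th : R) : R := p / (1 + ecc * cos th).

Definition sigmaK (d : cfg) (p : R) : R := Rpower (mu d * p) (/ 4).

(** H(theta, Zb, Wb, zb, wb): momenta (Zb,Wb), positions (zb,wb). *)
Definition Ham (d : cfg) (ecc p : R) (th : R) (ZW zw : V2 * V2) : R :=
  let Zb := fst ZW in let Wb := snd ZW in
  let zb := fst zw in let wb := snd zw in
  (vdot Zb Zb + vdot Wb Wb) / 2
  + (vdot zb (mv Jm Zb) + vdot wb (mv Jm Wb))
  + (p - rtrue ecc p th) / (2 * p) * (vdot zb zb + vdot wb wb)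
  - rtrue ecc p th / sigmaK d p * Upot d zb wb.

Definition coord4 (u : V2 * V2) (k : nat) : R :=
  match k with
  | 0%nat => fst (fst u) | 1%nat => snd (fst u)
  | 2%nat => fst (snd u) | _ => snd (snd u) end.
Definition set4 (u : V2 * V2) (k : nat) (s : R) : V2 * V2 :=
  match k with
  | 0%nat => ((s, snd (fst u)), snd u) | 1%nat => ((fst (fst u), s), snd u)
  | 2%nat => (fst u, (s, snd (snd u))) | _ => (fst u, (fst (snd u), s)) end.

Definition ham_solution (H : R -> V2 * V2 -> V2 * V2 -> R)
  (y x : R -> V2 * V2) : Prop :=
  forall (th : R) (k : nat), (k < 4)%nat ->
    exists dxk dyk : R,
      is_derive (fun s => coord4 (x s) k) th dxk /\
      is_derive (fun s => coord4 (y s) k) th dyk /\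
      is_derive (fun s => H th (set4 (y th) k s) (x th)) (coord4 (y th) k) dxk /\
      is_derive (fun s => H th (y th) (set4 (x th) k s)) (coord4 (x th) k) (- dyk).

Definition is_derive2 (f : R -> V2) (t : R) (v : V2) : Prop :=
  is_derive (fun s => fst (f s)) t (fst v) /\ is_derive (fun s => snd (f s)) t (snd v).

Definition qell (a : V2) (rf thf : R -> R) (t : R) : V2 :=
  vscal (rf t) (mv (Rot (thf t)) a).

(** steps (2),(3),(5) of the change of variables, for a position u and
    momentum U at time t with r = r(t), rd = r'(t), phi = theta(t). *)
Definition barpos (sg r phi : R) (u : V2) : V2 :=
  vscal sg (vscal (/ r) (mtv (Rot phi) u)).
Definition barmom (sg r rd phi : R) (U u : V2) : V2 :=
  vscal (/ sg) (vsub (vscal r (mtv (Rot phi) U)) (vscal rd (mtv (Rot phi) u))).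

(* In complex notation [A_i z = a_i z] and [B_i w = beta_i w], and [A^T M A = I]
   says that (1,1,1), (a_i) and (beta_i) are orthonormal for the mass-weighted
   Hermitian product.  Hence the triangle solution [Q_i = a_i z(t)] has coordinates
   [g = w = 0], [z = z(t)], with momenta [G = W = 0], [Z = z'(t)].  Kepler's laws give
   [r^2 theta' = sqrt (mu p) = sigma^2], so the rotation and the rescalings send
   [(z, Z)] to [(sigma, i sigma)].  This point is an equilibrium of [H]: the
   [z]-gradient vanishes because [sigma^4 = mu p], and the [w]-gradient because at a
   central configuration [delta_ij = mu |a_i - a_j|^3], which makes it proportional to
   [sum m_i m_j conj (a_i - a_j) (beta_i - beta_j) = sum m_i conj a_i beta_i = 0]. *)

From Stdlib Require Import Reals Lra Lia.
From Coquelicot Require Import Coquelicot.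
Open Scope R_scope.

Ltac C_eq := apply injective_projections; simpl.

(** * Complex notation for the planar linear algebra *)

(* [colJ a] is the matrix of multiplication by the complex number [a]. *)

Definition expi (phi : R) : C := (cos phi, sin phi).

Lemma vscal_RtoC (k : R) (u : V2) : vscal k u = (k * u)%C.
Proof. C_eq; ring. Qed.

Lemma vsub_Cminus (u v : V2) : vsub u v = (u - v)%C.
Proof. C_eq; ring. Qed.

Lemma mv_colJ (a u : V2) : mv (colJ a) u = (a * u)%C.
Proof. C_eq; ring. Qed.

Lemma mtv_colJ (a u : V2) : mtv (colJ a) u = (Cconj a * u)%C.
Proof. C_eq; ring. Qed.

Lemma msub_colJ (a b : V2) : msub (colJ a) (colJ b) = colJ (a - b)%C.
Proof. unfold msub, colJ; simpl; f_equal; ring. Qed.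

Lemma mscal_Rot_colJ (k phi : R) : mscal k (Rot phi) = colJ (k * expi phi)%C.
Proof. unfold mscal, Rot, colJ, expi; simpl; f_equal; ring. Qed.

Lemma Cconj_scal_expi (k phi : R) :
  (Cconj (RtoC k * expi phi) * (RtoC k * expi phi))%C = RtoC (k ^ 2).
Proof. pose proof (sin2_cos2 phi) as H; unfold Rsqr in H. C_eq; nra. Qed.

Lemma Cmod_scal_expi (k phi : R) : Cmod (RtoC k * expi phi)%C = Rabs k.
Proof.
  pose proof (sin2_cos2 phi) as H; unfold Rsqr in H.
  unfold Cmod, expi; simpl. rewrite <- sqrt_Rsqr_abs. f_equal. unfold Rsqr. nra.
Qed.

(** * Mass-orthonormal frames *)

Definition frame_comb (a b g z w : C) : C := (g + a * z + b * w)%C.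

Section MassOrthonormal.

Variables (m1 m2 m3 : R) (a1 a2 a3 b1 b2 b3 : C).

(* The identity [A^T M A = I] for the rows [(1, a_i, b_i)] of [A]. *)
Record mass_orthonormal : Prop := {
  mass_total : m1 + m2 + m3 = 1;
  mass_a_mean : (m1 * a1 + m2 * a2 + m3 * a3)%C = 0%C;
  mass_b_mean : (m1 * b1 + m2 * b2 + m3 * b3)%C = 0%C;
  mass_a_norm : (m1 * Cconj a1 * a1 + m2 * Cconj a2 * a2 + m3 * Cconj a3 * a3)%C = 1%C;
  mass_b_norm : (m1 * Cconj b1 * b1 + m2 * Cconj b2 * b2 + m3 * Cconj b3 * b3)%C = 1%C;
  mass_ab : (m1 * Cconj a1 * b1 + m2 * Cconj a2 * b2 + m3 * Cconj a3 * b3)%C = 0%C }.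

Lemma lagrange_identity (x1 x2 x3 y1 y2 y3 : C) :
  (m1 * m2 * (Cconj (x1 - x2) * (y1 - y2)) + m1 * m3 * (Cconj (x1 - x3) * (y1 - y3))
   + m2 * m3 * (Cconj (x2 - x3) * (y2 - y3)))%C
  = ((m1 + m2 + m3) * (m1 * Cconj x1 * y1 + m2 * Cconj x2 * y2 + m3 * Cconj x3 * y3)
     - Cconj (m1 * x1 + m2 * x2 + m3 * x3) * (m1 * y1 + m2 * y2 + m3 * y3))%C.
Proof. C_eq; ring. Qed.

Hypothesis Hon : mass_orthonormal.

Let Hmass : (m1 + m2 + m3)%C = 1%C.
Proof. rewrite <- !RtoC_plus, (mass_total Hon). reflexivity. Qed.

Lemma mass_left_inverse (g z w : C) :
  let q1 := frame_comb a1 b1 g z w in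
  let q2 := frame_comb a2 b2 g z w in
  let q3 := frame_comb a3 b3 g z w in
  (m1 * q1 + m2 * q2 + m3 * q3)%C = g /\
  (m1 * Cconj a1 * q1 + m2 * Cconj a2 * q2 + m3 * Cconj a3 * q3)%C = z /\
  (m1 * Cconj b1 * q1 + m2 * Cconj b2 * q2 + m3 * Cconj b3 * q3)%C = w.
Proof.
  unfold frame_comb.
  destruct Hon as [_ Ha Hb Haa Hbb Hab]; repeat split.
  - transitivity (g * (m1 + m2 + m3) + z * (m1 * a1 + m2 * a2 + m3 * a3)
                  + w * (m1 * b1 + m2 * b2 + m3 * b3))%C; [ring|].
    rewrite Hmass, Ha, Hb; ring.
  - transitivity (g * Cconj (m1 * a1 + m2 * a2 + m3 * a3)
                  + z * (m1 * Cconj a1 * a1 + m2 * Cconj a2 * a2 + m3 * Cconj a3 * a3)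
                  + w * (m1 * Cconj a1 * b1 + m2 * Cconj a2 * b2 + m3 * Cconj a3 * b3))%C;
      [C_eq; ring|].
    rewrite Ha, Haa, Hab. C_eq; ring.
  - transitivity (g * Cconj (m1 * b1 + m2 * b2 + m3 * b3)
                  + z * Cconj (m1 * Cconj a1 * b1 + m2 * Cconj a2 * b2 + m3 * Cconj a3 * b3)
                  + w * (m1 * Cconj b1 * b1 + m2 * Cconj b2 * b2 + m3 * Cconj b3 * b3))%C;
      [C_eq; ring|].
    rewrite Hb, Hab, Hbb. C_eq; ring.
Qed.

Lemma mass_frame_unique (g z w g' z' w' : C) :
  frame_comb a1 b1 g z w = frame_comb a1 b1 g' z' w' ->
  frame_comb a2 b2 g z w = frame_comb a2 b2 g' z' w' ->
  frame_comb a3 b3 g z w = frame_comb a3 b3 g' z' w' ->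
  g = g' /\ z = z' /\ w = w'.
Proof.
  intros E1 E2 E3.
  destruct (mass_left_inverse g z w) as [Hg [Hz Hw]].
  destruct (mass_left_inverse g' z' w') as [Hg' [Hz' Hw']].
  cbv zeta in *; rewrite E1, E2, E3 in Hg, Hz, Hw.
  rewrite <- Hg, <- Hz, <- Hw; auto.
Qed.

Lemma mass_momenta (v : C) :
  let P1 := (m1 * (a1 * v))%C in
  let P2 := (m2 * (a2 * v))%C in
  let P3 := (m3 * (a3 * v))%C in
  (P1 + P2 + P3)%C = 0%C /\
  (Cconj a1 * P1 + Cconj a2 * P2 + Cconj a3 * P3)%C = v /\
  (Cconj b1 * P1 + Cconj b2 * P2 + Cconj b3 * P3)%C = 0%C.
Proof.
  destruct (mass_left_inverse 0 v 0) as [Hg [Hz Hw]]; cbv zeta in *.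
  unfold frame_comb in *; repeat split;
    [etransitivity; [|exact Hg] | etransitivity; [|exact Hz] | etransitivity; [|exact Hw]];
    C_eq; ring.
Qed.

Lemma mass_lagrange_aa :
  (m1 * m2 * (Cconj (a1 - a2) * (a1 - a2)) + m1 * m3 * (Cconj (a1 - a3) * (a1 - a3))
   + m2 * m3 * (Cconj (a2 - a3) * (a2 - a3)))%C = 1%C.
Proof. rewrite lagrange_identity, Hmass, (mass_a_mean Hon), (mass_a_norm Hon). C_eq; ring. Qed.

Lemma mass_lagrange_ab :
  (m1 * m2 * (Cconj (a1 - a2) * (b1 - b2)) + m1 * m3 * (Cconj (a1 - a3) * (b1 - b3))
   + m2 * m3 * (Cconj (a2 - a3) * (b2 - b3)))%C = 0%C.
Proof. rewrite lagrange_identity, Hmass, (mass_a_mean Hon), (mass_ab Hon). C_eq; ring. Qed.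

End MassOrthonormal.

Lemma is_derive_uniq (f : R -> R) (x l1 l2 : R) :
  is_derive f x l1 -> is_derive f x l2 -> l1 = l2.
Proof. intros H1 H2. rewrite <- (is_derive_unique _ _ _ H1). now apply is_derive_unique. Qed.

Lemma is_derive_Derive (f : R -> R) (x l : R) :
  is_derive f x l -> Derive (fun y => f y) x = l.
Proof. apply is_derive_unique. Qed.

Lemma is_derive_eq_value (f : R -> R) (x l l' : R) :
  is_derive f x l -> l = l' -> is_derive f x l'.
Proof. intros H <-; exact H. Qed.

Lemma is_derive2_uniq (f : R -> V2) (t : R) (v v' : V2) :
  is_derive2 f t v -> is_derive2 f t v' -> v = v'.
Proof.
  intros [H1 H2] [H1' H2'].
  apply injective_projections; eapply is_derive_uniq; eauto.
Qed.

Lemma is_derive2_Cmult_l (a : C) (f : R -> V2) (t : R) (v : V2) :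
  is_derive2 f t v -> is_derive2 (fun s => a * f s)%C t (a * v)%C.
Proof.
  intros [H1 H2]. split; simpl.
  - exact (is_derive_minus _ _ _ _ _ (is_derive_scal _ _ (fst a) _ H1)
                                     (is_derive_scal _ _ (snd a) _ H2)).
  - exact (is_derive_plus _ _ _ _ _ (is_derive_scal _ _ (fst a) _ H2)
                                    (is_derive_scal _ _ (snd a) _ H1)).
Qed.

Lemma sin_sq_cos_sq (x : R) : sin x ^ 2 + cos x ^ 2 = 1.
Proof. rewrite <- !Rsqr_pow2. apply sin2_cos2. Qed.

Lemma Rpower_root_pow (x : R) (n : nat) : 0 < x -> (0 < n)%nat -> Rpower x (/ INR n) ^ n = x.
Proof.
  intros Hx Hn. rewrite <- Rpower_pow by apply exp_pos.
  rewrite Rpower_mult, Rinv_l by (apply not_0_INR; lia). apply Rpower_1; auto.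
Qed.

Lemma cbrt_pos (x : R) : 0 < cbrt x.
Proof. apply exp_pos. Qed.

Lemma cbrt_pow3 (x : R) : 0 < x -> cbrt x ^ 3 = x.
Proof.
  intro Hx. unfold cbrt. replace 3%R with (INR 3) by (simpl; ring).
  apply Rpower_root_pow; auto.
Qed.

Lemma inv_Cmod_line_derive (c s0 : R) (u e : C) : u <> 0%C ->
  is_derive (fun s => c / Cmod (u + RtoC (s - s0) * e)%C) s0
    (- c * Re (Cconj u * e) / Cmod u ^ 3).
Proof.
  intro Hu. apply Cmod_gt_0 in Hu.
  destruct u as [u1 u2], e as [e1 e2].
  unfold Cmod in *; simpl in *.
  assert (0 < u1 * (u1 * 1) + u2 * (u2 * 1)).
  { destruct (Rle_lt_dec (u1 * (u1 * 1) + u2 * (u2 * 1)) 0) as [H|H]; auto.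
    rewrite sqrt_neg_0 in Hu; lra. }
  auto_derive; rewrite ?Rplus_opp_r, ?Rmult_0_l, ?Ropp_0, ?Rplus_0_r, ?Rplus_0_l.
  - repeat split; lra.
  - field; lra.
Qed.

(** * The potential near a central configuration *)

Definition beta1 (d : cfg) : C := RtoC (rho1 d * sin (th1 d) / alpha d).
Definition beta2 (d : cfg) : C := (RtoC (- (rho2 d * sin (th2 d) / alpha d)) * expi (th3 d))%C.
Definition beta3 (d : cfg) : C := (RtoC (- (rho3 d * sin (th3 d) / alpha d)) * expi (- th2 d))%C.

Lemma Bm1_colJ (d : cfg) : Bm1 d = colJ (beta1 d).
Proof. unfold Bm1, mscal, I2, colJ, beta1; simpl; f_equal; ring. Qed.

Lemma Bm2_colJ (d : cfg) : Bm2 d = colJ (beta2 d).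
Proof. apply mscal_Rot_colJ. Qed.

Lemma Bm3_colJ (d : cfg) : Bm3 d = colJ (beta3 d).
Proof. apply mscal_Rot_colJ. Qed.

Lemma Upot_C (d : cfg) (z w : C) :
  Upot d z w =
    m1 d * m2 d * d12 d / Cmod ((pa1 d - pa2 d) * z + (beta1 d - beta2 d) * w)%C
  + m1 d * m3 d * d31 d / Cmod ((pa1 d - pa3 d) * z + (beta1 d - beta3 d) * w)%C
  + m2 d * m3 d * d23 d / Cmod ((pa2 d - pa3 d) * z + (beta2 d - beta3 d) * w)%C.
Proof.
  unfold Upot, Am1, Am2, Am3.
  rewrite Bm1_colJ, Bm2_colJ, Bm3_colJ, !msub_colJ, !mv_colJ. reflexivity.
Qed.

Lemma Upot_on_line (d : cfg) (sg t : R) (ez ew : V2) :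
  Upot d (vadd (sg, 0) (vscal t ez)) (vscal t ew) =
    m1 d * m2 d * d12 d
      / Cmod ((pa1 d - pa2 d) * sg + t * ((pa1 d - pa2 d) * ez + (beta1 d - beta2 d) * ew))%C
  + m1 d * m3 d * d31 d
      / Cmod ((pa1 d - pa3 d) * sg + t * ((pa1 d - pa3 d) * ez + (beta1 d - beta3 d) * ew))%C
  + m2 d * m3 d * d23 d
      / Cmod ((pa2 d - pa3 d) * sg + t * ((pa2 d - pa3 d) * ez + (beta2 d - beta3 d) * ew))%C.
Proof.
  rewrite Upot_C, !vscal_RtoC. change (vadd (sg, 0) ?u) with (RtoC sg + u)%C.
  f_equal; [f_equal|]; do 2 f_equal; ring.
Qed.

Lemma central_pair_value (m lam sg : R) (dd g ez ew : C) : dd <> 0%C -> 0 < sg ->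
  - (m * (lam * Cmod dd ^ 3)) * Re (Cconj (dd * sg) * (dd * ez + g * ew))%C
    / Cmod (dd * sg)%C ^ 3
  = - (lam / sg ^ 2) * Re (m * (Cconj dd * dd * ez + Cconj dd * g * ew))%C.
Proof.
  intros Hd Hsg. apply Cmod_gt_0 in Hd.
  rewrite Cmod_mult, Cmod_R, Rabs_pos_eq by lra.
  destruct dd as [d1 d2]; unfold Re; simpl; field; lra.
Qed.

Section CentralPotential.

Variables (d : cfg) (lam sg : R).
Hypotheses (Hon : mass_orthonormal (m1 d) (m2 d) (m3 d)
                    (pa1 d) (pa2 d) (pa3 d) (beta1 d) (beta2 d) (beta3 d))
  (Hsg : 0 < sg)
  (H12 : (pa1 d - pa2 d)%C <> 0%C) (H13 : (pa1 d - pa3 d)%C <> 0%C)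
  (H23 : (pa2 d - pa3 d)%C <> 0%C)
  (Hc12 : d12 d = lam * Cmod (pa1 d - pa2 d)%C ^ 3)
  (Hc31 : d31 d = lam * Cmod (pa1 d - pa3 d)%C ^ 3)
  (Hc23 : d23 d = lam * Cmod (pa2 d - pa3 d)%C ^ 3).

(* The Lagrange identities of the mass frame collapse the three pair terms. *)
Lemma Upot_line_derive (ez ew : V2) (s0 : R) :
  is_derive (fun s => Upot d (vadd (sg, 0) (vscal (s - s0) ez)) (vscal (s - s0) ew)) s0
    (- (lam / sg ^ 2) * fst ez).
Proof.
  assert (Hsg0 : RtoC sg <> 0%C) by (intro E; injection E; lra).
  assert (Hsum := is_derive_plus _ _ _ _ _
    (is_derive_plus _ _ _ _ _
       (inv_Cmod_line_derive (m1 d * m2 d * d12 d) s0 _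
          ((pa1 d - pa2 d) * ez + (beta1 d - beta2 d) * ew)%C (Cmult_neq_0 _ _ H12 Hsg0))
       (inv_Cmod_line_derive (m1 d * m3 d * d31 d) s0 _
          ((pa1 d - pa3 d) * ez + (beta1 d - beta3 d) * ew)%C (Cmult_neq_0 _ _ H13 Hsg0)))
    (inv_Cmod_line_derive (m2 d * m3 d * d23 d) s0 _
       ((pa2 d - pa3 d) * ez + (beta2 d - beta3 d) * ew)%C (Cmult_neq_0 _ _ H23 Hsg0))).
  eapply is_derive_ext; [intro s; symmetry; apply Upot_on_line|].
  eapply is_derive_eq_value; [exact Hsum|]. change (@plus R_NormedModule) with Rplus.
  rewrite Hc12, Hc31, Hc23, !central_pair_value by auto.
  rewrite <- !Rmult_plus_distr_l, <- !re_plus. f_equal.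
  transitivity (Re (ez * (m1 d * m2 d * (Cconj (pa1 d - pa2 d) * (pa1 d - pa2 d))
     + m1 d * m3 d * (Cconj (pa1 d - pa3 d) * (pa1 d - pa3 d))
     + m2 d * m3 d * (Cconj (pa2 d - pa3 d) * (pa2 d - pa3 d)))
   + ew * (m1 d * m2 d * (Cconj (pa1 d - pa2 d) * (beta1 d - beta2 d))
     + m1 d * m3 d * (Cconj (pa1 d - pa3 d) * (beta1 d - beta3 d))
     + m2 d * m3 d * (Cconj (pa2 d - pa3 d) * (beta2 d - beta3 d))))%C).
  - f_equal. C_eq; ring.
  - rewrite (mass_lagrange_aa _ _ _ _ _ _ _ _ _ Hon), (mass_lagrange_ab _ _ _ _ _ _ _ _ _ Hon).
    unfold Re; simpl; ring.
Qed.

End CentralPotential.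

(** * The Lagrange triangle of the charged problem *)

Section Configuration.

Variable d : cfg.
Hypotheses (Hm1 : 0 < m1 d) (Hm2 : 0 < m2 d) (Hm3 : 0 < m3 d)
  (Hmsum : m1 d + m2 d + m3 d = 1)
  (Hd12 : 0 < d12 d) (Hd23 : 0 < d23 d) (Hd31 : 0 < d31 d)
  (Hth1 : 0 < th1 d) (Hth2 : 0 < th2 d) (Hth3 : 0 < th3 d)
  (Hthsum : th1 d + th2 d + th3 d = PI)
  (Hsin : exists k : R, sin (th1 d) = k * cbrt (d23 d) /\
                        sin (th2 d) = k * cbrt (d31 d) /\
                        sin (th3 d) = k * cbrt (d12 d)).

Lemma sin_th1_plus : sin (th1 d) = sin (th2 d) * cos (th3 d) + cos (th2 d) * sin (th3 d).
Proof. replace (th1 d) with (PI - (th2 d + th3 d)) by lra. rewrite sin_PI_x; apply sin_plus. Qed.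

Lemma sin_th_pos : 0 < sin (th1 d) /\ 0 < sin (th2 d) /\ 0 < sin (th3 d).
Proof. repeat split; apply sin_gt_0; lra. Qed.

Let alpha_arg_pos :
  0 < m2 d * m3 d * sin (th1 d) ^ 2 + m3 d * m1 d * sin (th2 d) ^ 2 + m1 d * m2 d * sin (th3 d) ^ 2.
Proof.
  destruct sin_th_pos as [H1 [H2 H3]].
  assert (0 < m2 d * m3 d) by nra. assert (0 < m3 d * m1 d) by nra.
  assert (0 < m1 d * m2 d) by nra. assert (0 < sin (th1 d) ^ 2) by nra. nra.
Qed.

Lemma alpha_sq : alpha d ^ 2 =
  m2 d * m3 d * sin (th1 d) ^ 2 + m3 d * m1 d * sin (th2 d) ^ 2 + m1 d * m2 d * sin (th3 d) ^ 2.
Proof. unfold alpha; rewrite pow2_sqrt; [reflexivity | exact (Rlt_le _ _ alpha_arg_pos)]. Qed.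

Lemma alpha_pos : 0 < alpha d.
Proof. unfold alpha; apply sqrt_lt_R0, alpha_arg_pos. Qed.

Ltac config_field :=
  unfold pa1, pa2, pa3, expi, vscal; C_eq;
  rewrite ?sin_plus, ?cos_neg, ?sin_neg, ?sin_th1_plus;
  replace (m3 d) with (1 - m1 d - m2 d) by lra;
  field; pose proof alpha_pos; lra.

Lemma pa1_sub_pa2 : (pa1 d - pa2 d)%C = (RtoC (sin (th3 d) / alpha d) * expi (th2 d))%C.
Proof. config_field. Qed.

Lemma pa1_sub_pa3 : (pa1 d - pa3 d)%C = (RtoC (- (sin (th2 d) / alpha d)) * expi (- th3 d))%C.
Proof. config_field. Qed.

Lemma pa2_sub_pa3 : (pa2 d - pa3 d)%C = RtoC (- (sin (th1 d) / alpha d)).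
Proof. config_field. Qed.

Lemma pa_mean : (m1 d * pa1 d + m2 d * pa2 d + m3 d * pa3 d)%C = 0%C.
Proof. config_field. Qed.

Lemma mass_sin_sq : m1 d * m2 d * (sin (th3 d) / alpha d) ^ 2
  + m1 d * m3 d * (sin (th2 d) / alpha d) ^ 2 + m2 d * m3 d * (sin (th1 d) / alpha d) ^ 2 = 1.
Proof.
  pose proof alpha_pos.
  transitivity ((m2 d * m3 d * sin (th1 d) ^ 2 + m3 d * m1 d * sin (th2 d) ^ 2
                 + m1 d * m2 d * sin (th3 d) ^ 2) / alpha d ^ 2); [field; lra|].
  rewrite <- alpha_sq; field; lra.
Qed.

Lemma pa_norm : (m1 d * Cconj (pa1 d) * pa1 d + m2 d * Cconj (pa2 d) * pa2 d
   + m3 d * Cconj (pa3 d) * pa3 d)%C = 1%C.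
Proof.
  pose proof (lagrange_identity (m1 d) (m2 d) (m3 d) (pa1 d) (pa2 d) (pa3 d)
                (pa1 d) (pa2 d) (pa3 d)) as L.
  rewrite pa1_sub_pa2, pa1_sub_pa3, pa2_sub_pa3, <- !RtoC_plus, Hmsum, pa_mean, !Cconj_scal_expi in L.
  match goal with |- ?X = _ => replace X with (1 * X - Cconj 0 * 0)%C by (C_eq; ring) end.
  rewrite <- L, <- mass_sin_sq. C_eq; ring.
Qed.

Lemma beta_mean : (m1 d * beta1 d + m2 d * beta2 d + m3 d * beta3 d)%C = 0%C.
Proof.
  pose proof alpha_pos.
  unfold beta1, beta2, beta3, rho1, rho2, rho3, expi; C_eq;
  rewrite ?cos_neg, ?sin_neg, sin_th1_plus; field; lra.
Qed.

(* [m_i rho_i = sqrt (m1 m2 m3)], so [sum m_i |beta_i|^2 = alpha^2 / alpha^2]. *)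
Lemma beta_norm : (m1 d * Cconj (beta1 d) * beta1 d + m2 d * Cconj (beta2 d) * beta2 d
   + m3 d * Cconj (beta3 d) * beta3 d)%C = 1%C.
Proof.
  pose proof alpha_pos.
  assert (Hk : sqrt (m1 d * m2 d * m3 d) ^ 2 = m1 d * m2 d * m3 d).
  { apply pow2_sqrt. apply Rmult_le_pos; [|lra]. nra. }
  unfold beta1, beta2, beta3.
  set (k1 := rho1 d * sin (th1 d) / alpha d).
  set (k2 := - (rho2 d * sin (th2 d) / alpha d)); set (k3 := - (rho3 d * sin (th3 d) / alpha d)).
  transitivity (m1 d * RtoC (k1 ^ 2)
    + m2 d * (Cconj (RtoC k2 * expi (th3 d)) * (RtoC k2 * expi (th3 d)))
    + m3 d * (Cconj (RtoC k3 * expi (- th2 d)) * (RtoC k3 * expi (- th2 d))))%C; [C_eq; ring|].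
  rewrite !Cconj_scal_expi; unfold k1, k2, k3.
  transitivity (RtoC (sqrt (m1 d * m2 d * m3 d) ^ 2
     * (m2 d * m3 d * sin (th1 d) ^ 2 + m3 d * m1 d * sin (th2 d) ^ 2 + m1 d * m2 d * sin (th3 d) ^ 2)
     / (m1 d * m2 d * m3 d * alpha d ^ 2))).
  - unfold rho1, rho2, rho3. C_eq; field; lra.
  - rewrite Hk, <- alpha_sq. f_equal. field. split; [lra|]. nra.
Qed.

Lemma pa_beta_orth : (m1 d * Cconj (pa1 d) * beta1 d + m2 d * Cconj (pa2 d) * beta2 d
   + m3 d * Cconj (pa3 d) * beta3 d)%C = 0%C.
Proof.
  pose proof alpha_pos.
  unfold beta1, beta2, beta3, rho1, rho2, rho3, expi, pa1, pa2, pa3, vscal; C_eq;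
  rewrite ?cos_neg, ?sin_neg, ?sin_plus, sin_th1_plus;
  replace (m3 d) with (1 - m1 d - m2 d) by lra; field; lra.
Qed.

Lemma config_mass_orthonormal : mass_orthonormal (m1 d) (m2 d) (m3 d)
  (pa1 d) (pa2 d) (pa3 d) (beta1 d) (beta2 d) (beta3 d).
Proof. split; auto using pa_mean, beta_mean, pa_norm, beta_norm, pa_beta_orth. Qed.

Lemma Cmod_pa_sub :
  Cmod (pa1 d - pa2 d)%C = sin (th3 d) / alpha d /\
  Cmod (pa1 d - pa3 d)%C = sin (th2 d) / alpha d /\
  Cmod (pa2 d - pa3 d)%C = sin (th1 d) / alpha d.
Proof.
  pose proof alpha_pos. destruct sin_th_pos as [H1 [H2 H3]].
  rewrite pa1_sub_pa2, pa1_sub_pa3, pa2_sub_pa3, !Cmod_scal_expi, Cmod_R, !Rabs_Ropp.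
  repeat split; apply Rabs_pos_eq; left; apply Rdiv_lt_0_compat; auto.
Qed.

(* [Hsin] says [|a_i - a_j|] is proportional to [delta_ij^(1/3)]: the central
   configuration equations, with the proportionality constant forced to be [mu]. *)
Lemma central_configuration :
  d12 d = mu d * Cmod (pa1 d - pa2 d)%C ^ 3 /\
  d31 d = mu d * Cmod (pa1 d - pa3 d)%C ^ 3 /\
  d23 d = mu d * Cmod (pa2 d - pa3 d)%C ^ 3.
Proof.
  destruct Hsin as [k [S1 [S2 S3]]].
  pose proof alpha_pos. destruct sin_th_pos as [P1 [P2 P3]].
  destruct Cmod_pa_sub as [C12 [C13 C23]].
  assert (Hk : 0 < k) by (pose proof (cbrt_pos (d12 d)); nra).
  set (lam := (alpha d / k) ^ 3).
  assert (Hcube : forall x s, 0 < x -> s = k * cbrt x -> x = lam * (s / alpha d) ^ 3).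
  { intros x s Hx Hs. rewrite <- (cbrt_pow3 x Hx).
    replace (cbrt x) with (s / k) by (rewrite Hs; field; lra).
    unfold lam; field; lra. }
  assert (E12 := Hcube _ _ Hd12 S3). assert (E31 := Hcube _ _ Hd31 S2).
  assert (E23 := Hcube _ _ Hd23 S1).
  assert (Hmu : mu d = lam).
  { unfold mu. rewrite (vsub_Cminus (pa1 d) (pa2 d)), (vsub_Cminus (pa1 d) (pa3 d)),
      (vsub_Cminus (pa2 d) (pa3 d)).
    change vnorm with Cmod.
    rewrite C12, C13, C23, E12, E31, E23.
    transitivity (lam * (m1 d * m2 d * (sin (th3 d) / alpha d) ^ 2
      + m1 d * m3 d * (sin (th2 d) / alpha d) ^ 2 + m2 d * m3 d * (sin (th1 d) / alpha d) ^ 2));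
      [field; lra|].
    rewrite mass_sin_sq; ring. }
  rewrite Hmu, C12, C13, C23. auto.
Qed.

Lemma Upot_gradient (sg : R) (ez ew : V2) (s0 : R) : 0 < sg ->
  is_derive (fun s => Upot d (vadd (sg, 0) (vscal (s - s0) ez)) (vscal (s - s0) ew)) s0
    (- (mu d / sg ^ 2) * fst ez).
Proof.
  intro Hsg. pose proof alpha_pos. destruct sin_th_pos as [P1 [P2 P3]].
  destruct Cmod_pa_sub as [C12 [C13 C23]]. destruct central_configuration as [E12 [E31 E23]].
  apply Upot_line_derive; auto using config_mass_orthonormal;
    apply Cmod_gt_0; [rewrite C12 | rewrite C13 | rewrite C23];
    apply Rdiv_lt_0_compat; auto.
Qed.

End Configuration.

(** * Kepler orbits *)

Lemma conic_denom_pos (ecc th : R) : 0 <= ecc < 1 -> 0 < 1 + ecc * cos th.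
Proof. intro He. pose proof (COS_bound th). nra. Qed.

Section Kepler.

Variables (mu0 ecc p : R) (rf thf rdot thdot vx vy : R -> R).
Hypotheses (Hecc : 0 <= ecc < 1) (Hp : 0 < p)
  (Hrd : forall t, is_derive rf t (rdot t))
  (Hthd : forall t, is_derive thf t (thdot t))
  (Hr : forall t, rf t = rtrue ecc p (thf t))
  (Hvx : forall t, is_derive (fun s => rf s * cos (thf s)) t (vx t))
  (Hvy : forall t, is_derive (fun s => rf s * sin (thf s)) t (vy t))
  (Hax : forall t, is_derive vx t
           (- mu0 * (rf t * cos (thf t))
              / vnorm (rf t * cos (thf t), rf t * sin (thf t)) ^ 3))
  (Hay : forall t, is_derive vy t
           (- mu0 * (rf t * sin (thf t))
              / vnorm (rf t * cos (thf t), rf t * sin (thf t)) ^ 3)).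

Lemma kepler_r_pos (t : R) : 0 < rf t.
Proof.
  rewrite Hr. apply Rdiv_lt_0_compat; auto. apply conic_denom_pos; auto.
Qed.

Lemma kepler_vx (t : R) : vx t = rdot t * cos (thf t) - rf t * sin (thf t) * thdot t.
Proof.
  apply (is_derive_uniq _ t _ _ (Hvx t)). auto_derive.
  - split; [eexists; apply Hrd|split; [eexists; apply Hthd|auto]].
  - rewrite (is_derive_Derive _ _ _ (Hrd t)), (is_derive_Derive _ _ _ (Hthd t)). ring.
Qed.

Lemma kepler_vy (t : R) : vy t = rdot t * sin (thf t) + rf t * cos (thf t) * thdot t.
Proof.
  apply (is_derive_uniq _ t _ _ (Hvy t)). auto_derive.
  - split; [eexists; apply Hrd|split; [eexists; apply Hthd|auto]].
  - rewrite (is_derive_Derive _ _ _ (Hrd t)), (is_derive_Derive _ _ _ (Hthd t)). ring.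
Qed.

Lemma kepler_rdot (t : R) :
  rdot t = p * ecc * sin (thf t) * thdot t / (1 + ecc * cos (thf t)) ^ 2.
Proof.
  pose proof (conic_denom_pos ecc (thf t) Hecc).
  apply (is_derive_uniq rf t); auto.
  apply (is_derive_ext (fun s => p / (1 + ecc * cos (thf s)))); [intro s; now rewrite Hr|].
  auto_derive.
  - split; [eexists; apply Hthd|split; [lra|auto]].
  - rewrite (is_derive_Derive _ _ _ (Hthd t)). field. lra.
Qed.

Let ang_mom (t : R) : R := rf t * cos (thf t) * vy t - rf t * sin (thf t) * vx t.

Lemma ang_polar (t : R) : ang_mom t = rf t ^ 2 * thdot t.
Proof.
  unfold ang_mom. rewrite kepler_vx, kepler_vy.
  transitivity (rf t ^ 2 * thdot t * (sin (thf t) ^ 2 + cos (thf t) ^ 2)); [ring|].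
  rewrite sin_sq_cos_sq; ring.
Qed.

Lemma ang_const (t : R) : is_derive ang_mom t 0.
Proof.
  unfold ang_mom. auto_derive.
  - repeat split; eexists; eauto.
  - rewrite (is_derive_Derive _ _ _ (Hrd t)), (is_derive_Derive _ _ _ (Hthd t)),
      (is_derive_Derive _ _ _ (Hax t)), (is_derive_Derive _ _ _ (Hay t)),
      kepler_vx, kepler_vy.
    unfold Rdiv; ring.
Qed.

Lemma kepler_vx_conic (t : R) : vx t = - (ang_mom t / p) * sin (thf t).
Proof.
  pose proof (conic_denom_pos ecc (thf t) Hecc).
  rewrite ang_polar, kepler_vx, kepler_rdot, Hr. unfold rtrue. field. lra.
Qed.

Lemma kepler_vy_conic (t : R) : vy t = ang_mom t / p * (ecc + cos (thf t)).
Proof.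
  pose proof (conic_denom_pos ecc (thf t) Hecc).
  rewrite ang_polar, kepler_vy, kepler_rdot, Hr. unfold rtrue.
  apply Rminus_diag_uniq.
  transitivity (p * thdot t * ecc * (sin (thf t) ^ 2 + cos (thf t) ^ 2 - 1)
                / (1 + ecc * cos (thf t)) ^ 2); [field; lra|].
  rewrite sin_sq_cos_sq. field. lra.
Qed.

Lemma kepler_norm (t : R) : vnorm (rf t * cos (thf t), rf t * sin (thf t)) = rf t.
Proof.
  pose proof (kepler_r_pos t).
  unfold vnorm; simpl. apply sqrt_lem_1; try lra. nra.
  transitivity (rf t ^ 2 * (sin (thf t) ^ 2 + cos (thf t) ^ 2)); [|ring].
  rewrite sin_sq_cos_sq; ring.
Qed.

Lemma kepler_accel_x (t : R) :
  - (ang_mom t / p) * cos (thf t) * thdot t = - mu0 * (rf t * cos (thf t)) / rf t ^ 3.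
Proof.
  pose proof (Hax t) as Ha; rewrite kepler_norm in Ha.
  apply (is_derive_uniq vx t); [|exact Ha].
  apply (is_derive_ext (fun s => - (ang_mom s / p) * sin (thf s)));
    [intro s; now rewrite kepler_vx_conic|].
  auto_derive.
  - repeat split; eexists; [apply ang_const|apply Hthd].
  - rewrite (is_derive_Derive _ _ _ (ang_const t)), (is_derive_Derive _ _ _ (Hthd t)).
    field. lra.
Qed.

Lemma kepler_accel_y (t : R) :
  - (ang_mom t / p) * sin (thf t) * thdot t = - mu0 * (rf t * sin (thf t)) / rf t ^ 3.
Proof.
  pose proof (Hay t) as Ha; rewrite kepler_norm in Ha.
  apply (is_derive_uniq vy t); [|exact Ha].
  apply (is_derive_ext (fun s => ang_mom s / p * (ecc + cos (thf s))));
    [intro s; now rewrite kepler_vy_conic|].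
  auto_derive.
  - repeat split; eexists; [apply ang_const|apply Hthd].
  - rewrite (is_derive_Derive _ _ _ (ang_const t)), (is_derive_Derive _ _ _ (Hthd t)).
    field. lra.
Qed.

Lemma kepler_angular_momentum (t : R) : (rf t ^ 2 * thdot t) ^ 2 = mu0 * p.
Proof.
  pose proof (kepler_r_pos t) as Hr0.
  pose proof (kepler_accel_x t) as Ex; pose proof (kepler_accel_y t) as Ey.
  rewrite ang_polar in Ex, Ey.
  set (L := rf t ^ 2 * thdot t) in *.
  assert (E : L / p * thdot t = mu0 / rf t ^ 2).
  { transitivity (L / p * thdot t * (sin (thf t) ^ 2 + cos (thf t) ^ 2));
      [rewrite sin_sq_cos_sq; ring|].
    transitivity (- (- (L / p) * cos (thf t) * thdot t) * cos (thf t)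
                  - (- (L / p) * sin (thf t) * thdot t) * sin (thf t)); [ring|].
    rewrite Ex, Ey.
    transitivity (mu0 / rf t ^ 2 * (sin (thf t) ^ 2 + cos (thf t) ^ 2)); [field; lra|].
    rewrite sin_sq_cos_sq; ring. }
  transitivity (rf t ^ 2 * p * (L / p * thdot t)); [unfold L; field; lra|].
  rewrite E. field. lra.
Qed.

End Kepler.

Lemma sigmaK_pow4 (d : cfg) (p : R) : 0 < mu d * p -> mu d * p = sigmaK d p ^ 4.
Proof.
  intro Hmp. unfold sigmaK. replace (/ 4) with (/ INR 4) by (simpl; field).
  symmetry; apply Rpower_root_pow; [exact Hmp | lia].
Qed.

Lemma sigmaK_sq (d : cfg) (p L : R) : 0 < L -> L ^ 2 = mu d * p -> L = sigmaK d p ^ 2.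
Proof.
  intros HL HL2. assert (Hsg2 : 0 < sigmaK d p ^ 2) by (apply pow_lt, exp_pos).
  assert (L ^ 2 = (sigmaK d p ^ 2) ^ 2)
    by (rewrite HL2, sigmaK_pow4 by (rewrite <- HL2; apply pow_lt; auto); ring).
  nra.
Qed.

(** * The Hamiltonian at the rotating equilibrium *)

Definition unit4 (k : nat) : V2 * V2 :=
  match k with
  | 0%nat => ((1, 0), v0) | 1%nat => ((0, 1), v0)
  | 2%nat => (v0, (1, 0)) | _ => (v0, (0, 1)) end.

Lemma set4_line (u : V2 * V2) (k : nat) (s : R) :
  set4 u k s = (vadd (fst u) (vscal (s - coord4 u k) (fst (unit4 k))),
                vadd (snd u) (vscal (s - coord4 u k) (snd (unit4 k)))).
Proof.
  destruct u as [[z1 z2] [w1 w2]].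
  destruct k as [|[|[|k]]]; unfold vadd, vscal; simpl; repeat f_equal; ring.
Qed.

Lemma vadd_v0_l (u : V2) : vadd v0 u = u.
Proof. unfold vadd, v0; destruct u; simpl; f_equal; ring. Qed.

Section Hamiltonian.

Variables (d : cfg) (ecc p : R).
Local Notation sg := (sigmaK d p).
Hypotheses (Hp : 0 < p) (Hsg : 0 < sg) (Hsg4 : mu d * p = sg ^ 4)
  (HU : forall (ez ew : V2) (s0 : R),
     is_derive (fun s => Upot d (vadd (sg, 0) (vscal (s - s0) ez)) (vscal (s - s0) ew)) s0
       (- (mu d / sg ^ 2) * fst ez)).

Lemma Ham_position_critical (th : R) (ez ew : V2) (s0 : R) :
  is_derive (fun s => Ham d ecc p th ((0, sg), v0)
                        (vadd (sg, 0) (vscal (s - s0) ez), vscal (s - s0) ew)) s0 0.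
Proof.
  pose (U := fun s => Upot d (vadd (sg, 0) (vscal (s - s0) ez)) (vscal (s - s0) ew)).
  assert (HUl : is_derive U s0 (- (mu d / sg ^ 2) * fst ez)) by apply HU.
  eapply is_derive_ext.
  { intro s. symmetry. unfold Ham; cbn [fst snd].
    change (Upot d (vadd (sg, 0) (vscal (s - s0) ez)) (vscal (s - s0) ew)) with (U s).
    unfold vdot, mv, Jm, vadd, vscal, v0; cbn [fst snd a11 a12 a21 a22].
    reflexivity. }
  clearbody U. auto_derive; [eexists; exact HUl|].
  rewrite (is_derive_Derive _ _ _ HUl), Rplus_opp_r.
  replace (mu d) with (sg ^ 4 / p) by (rewrite <- Hsg4; field; lra).
  field. lra.
Qed.

Lemma Ham_momentum_critical (th : R) (eZ eW : V2) (s0 : R) :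
  is_derive (fun s => Ham d ecc p th (vadd (0, sg) (vscal (s - s0) eZ), vscal (s - s0) eW)
                        ((sg, 0), v0)) s0 0.
Proof.
  unfold Ham, vdot, mv, Jm, vadd, vscal, v0; cbn [fst snd a11 a12 a21 a22].
  auto_derive; [auto|]. rewrite Rplus_opp_r. field.
Qed.

Lemma Ham_equilibrium :
  ham_solution (Ham d ecc p) (fun _ => ((0, sg), v0)) (fun _ => ((sg, 0), v0)).
Proof.
  intros th k _. exists 0, 0.
  split; [refine (is_derive_const _ _)|]. split; [refine (is_derive_const _ _)|]. split.
  - eapply is_derive_ext; [|apply (Ham_momentum_critical th (fst (unit4 k)) (snd (unit4 k)))].
    intro s. cbv beta. rewrite set4_line, vadd_v0_l. reflexivity.
  - rewrite Ropp_0.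
    eapply is_derive_ext; [|apply (Ham_position_critical th (fst (unit4 k)) (snd (unit4 k)))].
    intro s. cbv beta. rewrite set4_line, vadd_v0_l. reflexivity.
Qed.

End Hamiltonian.

(** * The triangle solution in the new variables *)

Definition orbit (rf thf : R -> R) (t : R) : V2 := (rf t * cos (thf t), rf t * sin (thf t)).

Lemma qell_orbit (a : V2) (rf thf : R -> R) (t : R) :
  qell a rf thf t = (a * orbit rf thf t)%C.
Proof. unfold qell, orbit, vscal, mv, Rot; C_eq; ring. Qed.

Lemma barpos_orbit (sg r phi : R) : r <> 0 -> barpos sg r phi (r * cos phi, r * sin phi) = (sg, 0).
Proof.
  intro Hr. pose proof (sin_sq_cos_sq phi).
  unfold barpos, vscal, mtv, Rot; simpl. f_equal.
  - transitivity (sg * (sin phi ^ 2 + cos phi ^ 2)); [field; auto | rewrite H; ring].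
  - field; auto.
Qed.

Lemma barmom_orbit (sg r rd phi om : R) : sg <> 0 ->
  barmom sg r rd phi (rd * cos phi - r * sin phi * om, rd * sin phi + r * cos phi * om)
    (r * cos phi, r * sin phi) = (0, r ^ 2 * om / sg).
Proof.
  intro Hsg. pose proof (sin_sq_cos_sq phi).
  unfold barmom, vscal, vsub, mtv, Rot; simpl. f_equal.
  - field; auto.
  - transitivity (r ^ 2 * om / sg * (sin phi ^ 2 + cos phi ^ 2)); [field; auto | rewrite H; field; auto].
Qed.

Lemma barpos_v0 (sg r phi : R) : barpos sg r phi v0 = v0.
Proof. unfold barpos, vscal, mtv, v0; simpl; f_equal; ring. Qed.

Lemma barmom_v0 (sg r rd phi : R) : barmom sg r rd phi v0 v0 = v0.
Proof. unfold barmom, vscal, vsub, mtv, v0; simpl; f_equal; ring. Qed.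

Lemma frame_comb_vadd (a b g z w : V2) :
  vadd g (vadd (mv (colJ a) z) (mv (colJ b) w)) = frame_comb a b g z w.
Proof. unfold frame_comb; C_eq; ring. Qed.

Lemma qell_frame_comb (a b : V2) (rf thf : R -> R) (t : R) :
  qell a rf thf t = frame_comb a b v0 (orbit rf thf t) v0.
Proof. unfold qell, orbit, frame_comb, vscal, mv, Rot; C_eq; ring. Qed.

Section TriangleSolution.

Variables (d : cfg) (rf thf vx vy : R -> R).
Hypotheses (Hon : mass_orthonormal (m1 d) (m2 d) (m3 d)
                    (pa1 d) (pa2 d) (pa3 d) (beta1 d) (beta2 d) (beta3 d))
  (Hvx : forall t, is_derive (fun s => rf s * cos (thf s)) t (vx t))
  (Hvy : forall t, is_derive (fun s => rf s * sin (thf s)) t (vy t)).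

Lemma triangle_positions (g z w : R -> V2)
  (HQ1 : forall t, qell (pa1 d) rf thf t = vadd (g t) (vadd (mv (Am1 d) (z t)) (mv (Bm1 d) (w t))))
  (HQ2 : forall t, qell (pa2 d) rf thf t = vadd (g t) (vadd (mv (Am2 d) (z t)) (mv (Bm2 d) (w t))))
  (HQ3 : forall t, qell (pa3 d) rf thf t = vadd (g t) (vadd (mv (Am3 d) (z t)) (mv (Bm3 d) (w t))))
  (t : R) : g t = v0 /\ z t = orbit rf thf t /\ w t = v0.
Proof.
  unfold Am1, Am2, Am3 in *; rewrite Bm1_colJ, Bm2_colJ, Bm3_colJ in *.
  apply (mass_frame_unique _ _ _ _ _ _ _ _ _ Hon);
    rewrite <- qell_frame_comb, <- frame_comb_vadd; symmetry; auto.
Qed.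

Lemma qell_is_derive2 (a : V2) (t : R) : is_derive2 (qell a rf thf) t (a * (vx t, vy t))%C.
Proof.
  destruct (is_derive2_Cmult_l a (orbit rf thf) t (vx t, vy t) (conj (Hvx t) (Hvy t)))
    as [H1 H2].
  split; (eapply is_derive_ext; [|eassumption]); intro s; rewrite qell_orbit; reflexivity.
Qed.

Lemma triangle_momenta (P1 P2 P3 G Z W : R -> V2)
  (HP1 : forall t, exists v, is_derive2 (qell (pa1 d) rf thf) t v /\ P1 t = vscal (m1 d) v)
  (HP2 : forall t, exists v, is_derive2 (qell (pa2 d) rf thf) t v /\ P2 t = vscal (m2 d) v)
  (HP3 : forall t, exists v, is_derive2 (qell (pa3 d) rf thf) t v /\ P3 t = vscal (m3 d) v)
  (HG : forall t, G t = vadd (P1 t) (vadd (P2 t) (P3 t)))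
  (HZ : forall t, Z t = vadd (mtv (Am1 d) (P1 t)) (vadd (mtv (Am2 d) (P2 t)) (mtv (Am3 d) (P3 t))))
  (HW : forall t, W t = vadd (mtv (Bm1 d) (P1 t)) (vadd (mtv (Bm2 d) (P2 t)) (mtv (Bm3 d) (P3 t))))
  (t : R) : G t = v0 /\ Z t = (vx t, vy t) /\ W t = v0.
Proof.
  destruct (HP1 t) as [v1 [Hv1 E1]], (HP2 t) as [v2 [Hv2 E2]], (HP3 t) as [v3 [Hv3 E3]].
  rewrite (is_derive2_uniq _ _ _ _ Hv1 (qell_is_derive2 _ t)) in E1.
  rewrite (is_derive2_uniq _ _ _ _ Hv2 (qell_is_derive2 _ t)) in E2.
  rewrite (is_derive2_uniq _ _ _ _ Hv3 (qell_is_derive2 _ t)) in E3.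
  rewrite HG, HZ, HW, E1, E2, E3. unfold Am1, Am2, Am3.
  rewrite Bm1_colJ, Bm2_colJ, Bm3_colJ, !mtv_colJ, !vscal_RtoC.
  destruct (mass_momenta _ _ _ _ _ _ _ _ _ Hon (vx t, vy t)) as [SG [SZ SW]]; cbv zeta in *.
  repeat split;
    [etransitivity; [|exact SG] | etransitivity; [|exact SZ] | etransitivity; [|exact SW]];
    C_eq; ring.
Qed.

End TriangleSolution.

Theorem proposition3p2
  (d : cfg)
  (* masses *)
  (Hm1 : 0 < m1 d) (Hm2 : 0 < m2 d) (Hm3 : 0 < m3 d)
  (Hmsum : m1 d + m2 d + m3 d = 1)
  (* delta_ij > 0 and the cube-root triangle inequalities *)
  (Hd12 : 0 < d12 d) (Hd23 : 0 < d23 d) (Hd31 : 0 < d31 d)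
  (Htri1 : cbrt (d12 d) + cbrt (d23 d) > cbrt (d31 d))
  (Htri2 : cbrt (d23 d) + cbrt (d31 d) > cbrt (d12 d))
  (Htri3 : cbrt (d31 d) + cbrt (d12 d) > cbrt (d23 d))
  (* inner angles of the non-collinear central configuration *)
  (Hth1 : 0 < th1 d) (Hth2 : 0 < th2 d) (Hth3 : 0 < th3 d)
  (Hthsum : th1 d + th2 d + th3 d = PI)
  (Hsin : exists k : R, sin (th1 d) = k * cbrt (d23 d) /\
                        sin (th2 d) = k * cbrt (d31 d) /\
                        sin (th3 d) = k * cbrt (d12 d))
  (* the elliptic Kepler orbit z(t) = r(t) (cos theta(t), sin theta(t)) *)
  (ecc p : R) (Hecc : 0 <= ecc < 1) (Hp : 0 < p)
  (rf thf rdot thdot vx vy : R -> R)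
  (Hrd : forall t, is_derive rf t (rdot t))
  (Hthd : forall t, is_derive thf t (thdot t))
  (Hthpos : forall t, 0 < thdot t)
  (Hr : forall t, rf t = rtrue ecc p (thf t))
  (Hvx : forall t, is_derive (fun s => rf s * cos (thf s)) t (vx t))
  (Hvy : forall t, is_derive (fun s => rf s * sin (thf s)) t (vy t))
  (Hax : forall t, is_derive vx t
           (- mu d * (rf t * cos (thf t))
              / vnorm (rf t * cos (thf t), rf t * sin (thf t)) ^ 3))
  (Hay : forall t, is_derive vy t
           (- mu d * (rf t * sin (thf t))
              / vnorm (rf t * cos (thf t), rf t * sin (thf t)) ^ 3))
  (* momenta of the elliptic triangle solution: P = M Q' *)
  (P1 P2 P3 : R -> V2)
  (HP1 : forall t, exists v, is_derive2 (qell (pa1 d) rf thf) t v /\ P1 t = vscal (m1 d) v)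
  (HP2 : forall t, exists v, is_derive2 (qell (pa2 d) rf thf) t v /\ P2 t = vscal (m2 d) v)
  (HP3 : forall t, exists v, is_derive2 (qell (pa3 d) rf thf) t v /\ P3 t = vscal (m3 d) v)
  (* step (1): Q = A X with X = (g,z,w), and Y = (G,Z,W) = A^T P *)
  (g z w G Z W : R -> V2)
  (HQ1 : forall t, qell (pa1 d) rf thf t = vadd (g t) (vadd (mv (Am1 d) (z t)) (mv (Bm1 d) (w t))))
  (HQ2 : forall t, qell (pa2 d) rf thf t = vadd (g t) (vadd (mv (Am2 d) (z t)) (mv (Bm2 d) (w t))))
  (HQ3 : forall t, qell (pa3 d) rf thf t = vadd (g t) (vadd (mv (Am3 d) (z t)) (mv (Bm3 d) (w t))))
  (HG : forall t, G t = vadd (P1 t) (vadd (P2 t) (P3 t)))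
  (HZ : forall t, Z t = vadd (mtv (Am1 d) (P1 t)) (vadd (mtv (Am2 d) (P2 t)) (mtv (Am3 d) (P3 t))))
  (HW : forall t, W t = vadd (mtv (Bm1 d) (P1 t)) (vadd (mtv (Bm2 d) (P2 t)) (mtv (Bm3 d) (P3 t)))) :
  let sg := sigmaK d p in
  (forall t, g t = v0 /\ G t = v0) /\
  (forall t,
     barmom sg (rf t) (rdot t) (thf t) (Z t) (z t) = (0, sg) /\
     barmom sg (rf t) (rdot t) (thf t) (W t) (w t) = v0 /\
     barpos sg (rf t) (thf t) (z t) = (sg, 0) /\
     barpos sg (rf t) (thf t) (w t) = v0) /\
  ham_solution (Ham d ecc p) (fun _ => ((0, sg), v0)) (fun _ => ((sg, 0), v0)).
Proof.
  intros sg.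
  assert (Hon : mass_orthonormal (m1 d) (m2 d) (m3 d) (pa1 d) (pa2 d) (pa3 d)
                  (beta1 d) (beta2 d) (beta3 d)) by (apply config_mass_orthonormal; auto).
  assert (Hr0 : forall t, 0 < rf t) by (intro t; eapply kepler_r_pos; eauto).
  assert (HL : forall t, (rf t ^ 2 * thdot t) ^ 2 = mu d * p)
    by (intro t; eapply kepler_angular_momentum; eauto).
  assert (Hsg : 0 < sg) by apply exp_pos.
  assert (HL0 : forall t, 0 < rf t ^ 2 * thdot t)
    by (intro t; apply Rmult_lt_0_compat; [apply pow_lt|]; auto).
  assert (Hsg4 : mu d * p = sg ^ 4)
    by (apply sigmaK_pow4; rewrite <- (HL 0); apply pow_lt, HL0).
  assert (Hang : forall t, rf t ^ 2 * thdot t = sg ^ 2)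
    by (intro t; apply sigmaK_sq; auto).
  pose proof (triangle_positions d rf thf Hon g z w HQ1 HQ2 HQ3) as Hpos.
  pose proof (triangle_momenta d rf thf vx vy Hon Hvx Hvy P1 P2 P3 G Z W HP1 HP2 HP3 HG HZ HW)
    as Hmom.
  split; [|split].
  - intro t. destruct (Hpos t) as [-> _], (Hmom t) as [-> _]. auto.
  - intro t. destruct (Hpos t) as [_ [-> ->]], (Hmom t) as [_ [-> ->]].
    rewrite (kepler_vx rf thf rdot thdot vx), (kepler_vy rf thf rdot thdot vy); auto.
    pose proof (Hr0 t). unfold orbit.
    rewrite barmom_orbit, Hang, barmom_v0, barpos_orbit, barpos_v0 by lra.
    repeat split; f_equal; field; lra.
  - apply Ham_equilibrium; auto.
    intros; apply Upot_gradient; auto.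
Qed.
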